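(* Let $n\ge 2$, let $a_1,\dots,a_n$ be distinct real numbers, and let $F(a)=\sum_{k=0}^n A_k a^k=\prod_{i=1}^n(a-a_i)$ (so $A_n=1$). Fix signs $\epsilon_i\in\{\pm1\}$ and real numbers $\xi_1,\dots,\xi_n$, put $\Delta_i=\epsilon_i(a-a_i)$ and $$x(a)=\sum_{i=1}^n\frac{\xi_i}{\sqrt{\Delta_i}},$$ and work on an open interval $I\subset(0,\infty)$ on which all $\Delta_i>0$ and $\dot x=dx/da\neq0$. On $M=I\times\mathbb{R}$ with coordinates $(a,y)$ consider $$H=\Pi^2+a\,P_y^2,\qquad \Pi=\frac{a}{\dot x}\,P_a .$$ Define $$G=\sum_{k=0}^n A_{n-k}H^{n-k}P_y^{2k},\quad Q_1=\sum_{k=1}^n\tilde b_k\,H^{n-k}\,\Pi\,P_y^{2k-1},\quad Q_2=\sum_{k=1}^n\tilde c_k\,H^{n-k}P_y^{2k},$$ where for $k=1,\dots,n$ $$\tilde b_k=(-1)^k\sum_{i=1}^n\frac{\xi_i}{\sqrt{\Delta_i}}\,\sigma^i_{k-1},\qquad \tilde c_k=\frac{(-1)^{k+1}}{2}\Big(\sum_{i=1}^n\frac{\xi_i^2}{\Delta_i}\sigma^i_{k-1}+\sum_{i\neq j}\frac{\xi_i\xi_j}{\sqrt{\Delta_i\Delta_j}}\big(\sigma^{ij}_{k-1}+a\,\sigma^{ij}_{k-2}\big)\Big),$$ and set $$S_1=Q_1+y\,G,\qquad S_2=Q_2+y\,Q_1+\frac{y^2}{2}G .$$ Then $\{H,P_y\}=\{H,S_1\}=\{H,S_2\}=0$,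 and each of the triples $(H,P_y,S_1)$ and $(H,P_y,S_2)$ is functionally independent (i.e. $dH\wedge dP_y\wedge dS_1$ and $dH\wedge dP_y\wedge dS_2$ do not vanish identically). Thus $\{H,P_y,S_1\}$ and $\{H,P_y,S_2\}$ are two maximally superintegrable systems.
   Context: $\{\cdot,\cdot\}$ is the canonical Poisson bracket on $T^*M$, $(P_a,P_y)$ being the momenta conjugate to $(a,y)$; $H$ is the geodesic Hamiltonian of the metric $g=\dot x^2a^{-2}da^2+a^{-1}dy^2$. The symmetric functions of the roots are defined as follows: $\sigma_k$ ($0\le k\le n$) by $\prod_{i=1}^n(a-a_i)=\sum_{k=0}^n(-1)^k\sigma_k a^{n-k}$; for each $i$, $\sigma^i_m$ ($-1\le m\le n$) by $\prod_{l\neq i}(a-a_l)=\sum_{m=0}^{n-1}(-1)^m\sigma^i_m a^{n-1-m}$ together with $\sigma^i_{-1}=\sigma^i_n=0$; for $i\neq j$, $\sigma^{ij}_m$ ($-2\le m\le n$) by $\prod_{l\neq i,j}(a-a_l)=\sum_{m=0}^{n-2}(-1)^m\sigma^{ij}_m a^{n-2-m}$ together with $\sigma^{ij}_{-2}=\sigma^{ij}_{-1}=\sigma^{ij}_{n-1}=\sigma^{ij}_n=0$. *)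

From Stdlib Require Import Reals Lra List Arith.
From Coquelicot Require Import Coquelicot.
Open Scope R_scope.

(* finite sum  sum_{k = m}^{m+len-1} f k *)
Definition rsum (m len : nat) (f : nat -> R) : R :=
  fold_right Rplus 0 (map f (seq m len)).

(* prodcoef l k = coefficient of X^k in  prod_{c in l} (X - c) *)
Fixpoint prodcoef (l : list R) (k : nat) : R :=
  match l with
  | nil => if Nat.eqb k 0 then 1 else 0
  | c :: l' => (match k with O => 0 | S k' => prodcoef l' k' end) - c * prodcoef l' k
  end.

(* sigma l m : defined by  prod_{c in l}(X - c) = sum_{m=0}^{N} (-1)^m sigma_m X^(N-m),
   N = length l, and sigma_m = 0 for m > N. *)
Definition sigma (l : list R) (m : nat) : R :=
  if Nat.leb m (length l) then (-1) ^ m * prodcoef l (length l - m) else 0.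

Definition sigma_pred (l : list R) (m : nat) : R :=
  match m with O => 0 | S m' => sigma l m' end.

Section Model.
Variables (n : nat) (ai : nat -> R) (eps : nat -> R) (xi : nat -> R).

(* roots a_1..a_n are indexed by 0..n-1 *)
Definition roots : list R := map ai (seq 0 n).
Definition roots_but (i : nat) : list R :=
  map ai (filter (fun l => negb (Nat.eqb l i)) (seq 0 n)).
Definition roots_but2 (i j : nat) : list R :=
  map ai (filter (fun l => andb (negb (Nat.eqb l i)) (negb (Nat.eqb l j))) (seq 0 n)).

Definition Acoef (k : nat) : R := prodcoef roots k.
Definition sig_i (i m : nat) : R := sigma (roots_but i) m.
Definition sig_ij (i j m : nat) : R := sigma (roots_but2 i j) m.
Definition sig_ij_pred (i j m : nat) : R := sigma_pred (roots_but2 i j) m.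

Definition Deltai (i : nat) (a : R) : R := eps i * (a - ai i).

Definition xfun (a : R) : R := rsum 0 n (fun i => xi i / sqrt (Deltai i a)).
Definition xdot (a : R) : R := Derive xfun a.

Definition btil (k : nat) (a : R) : R :=
  (-1) ^ k * rsum 0 n (fun i => xi i / sqrt (Deltai i a) * sig_i i (k - 1)).

Definition ctil (k : nat) (a : R) : R :=
  (-1) ^ (k + 1) / 2 *
  ( rsum 0 n (fun i => xi i ^ 2 / Deltai i a * sig_i i (k - 1))
  + rsum 0 n (fun i => rsum 0 n (fun j =>
      if Nat.eqb i j then 0 else
      xi i * xi j / sqrt (Deltai i a * Deltai j a) *
        (sig_ij i j (k - 1) + a * sig_ij_pred i j (k - 1)))) ).

Definition PiF (a y pa py : R) : R := a / xdot a * pa.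
Definition HF (a y pa py : R) : R := (PiF a y pa py) ^ 2 + a * py ^ 2.
Definition PyF (a y pa py : R) : R := py.

Definition GF (a y pa py : R) : R :=
  rsum 0 (S n) (fun k => Acoef (n - k) * (HF a y pa py) ^ (n - k) * py ^ (2 * k)).
Definition Q1F (a y pa py : R) : R :=
  rsum 1 n (fun k => btil k a * (HF a y pa py) ^ (n - k) * PiF a y pa py * py ^ (2 * k - 1)).
Definition Q2F (a y pa py : R) : R :=
  rsum 1 n (fun k => ctil k a * (HF a y pa py) ^ (n - k) * py ^ (2 * k)).

Definition S1F (a y pa py : R) : R := Q1F a y pa py + y * GF a y pa py.
Definition S2F (a y pa py : R) : R :=
  Q2F a y pa py + y * Q1F a y pa py + y ^ 2 / 2 * GF a y pa py.

End Model.

Definition dpart (c : nat) (f : R -> R -> R -> R -> R) (a y pa py : R) : R :=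
  match c with
  | 0%nat => Derive (fun t => f t y pa py) a
  | 1%nat => Derive (fun t => f a t pa py) y
  | 2%nat => Derive (fun t => f a y t py) pa
  | _ => Derive (fun t => f a y pa t) py
  end.

Definition pbracket (f g : R -> R -> R -> R -> R) (a y pa py : R) : R :=
  dpart 0 f a y pa py * dpart 2 g a y pa py - dpart 2 f a y pa py * dpart 0 g a y pa py
  + dpart 1 f a y pa py * dpart 3 g a y pa py - dpart 3 f a y pa py * dpart 1 g a y pa py.

Definition det3 (m11 m12 m13 m21 m22 m23 m31 m32 m33 : R) : R :=
  m11 * (m22 * m33 - m23 * m32) - m12 * (m21 * m33 - m23 * m31)
  + m13 * (m21 * m32 - m22 * m31).

(* component of df /\ dg /\ dh on d x^i /\ d x^j /\ d x^k *)
Definition wedge3_comp (f g h : R -> R -> R -> R -> R) (i j k : nat) (a y pa py : R) : R :=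
  det3 (dpart i f a y pa py) (dpart j f a y pa py) (dpart k f a y pa py)
       (dpart i g a y pa py) (dpart j g a y pa py) (dpart k g a y pa py)
       (dpart i h a y pa py) (dpart j h a y pa py) (dpart k h a y pa py).

(* functional independence on M = I x R : the 3-form df/\dg/\dh does not vanish
   identically on T*M, i.e. some coordinate component is nonzero at some point *)
Definition func_indep (I : R -> Prop) (f g h : R -> R -> R -> R -> R) : Prop :=
  exists a y pa py, I a /\
    exists i j k, (i < j)%nat /\ (j < k)%nat /\ (k < 4)%nat /\
      wedge3_comp f g h i j k a y pa py <> 0.

(* Write Pi = r(a) P_a with r = a / xdot. On functions of (a, P_a, P_y) the bracket {H, .}
   is a derivation with {H, H} = 0, {H, Pi} = r P_y^2 and {H, beta(a)} = -2 r beta' Pi, while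
   {H, y} = -2 a P_y. Hence {H, G} = 0, and the identities {H, Q1} = 2 a P_y G and
   {H, Q2} = 2 a P_y Q1 are exactly what the y-terms of S1 and S2 need. The first follows by
   Abel summation from b_k + 2 a b_k' - 2 b_(k+1)' = 2 xdot A_(n-k), the second from
   c~_k' = - xdot b~_k; both are coefficient identities for
   F(z) = (z - a_i) prod_(l <> i) (z - a_l), combined with (a - a_i) f_i' = - f_i / 2 for
   f_i = xi_i / sqrt Delta_i. Independence is read off at P_y = 0, where dH /\ dP_y /\ dS has
   the nonzero component dH/dP_a * dS/dy = 2 r^2 H^n. *)

From Stdlib Require Import Reals List Arith Lra Lia Permutation.
From Coquelicot Require Import Coquelicot.
Open Scope R_scope.

Lemma rsum_cons m len f : rsum m (S len) f = f m + rsum (S m) len f.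
Proof. reflexivity. Qed.

Lemma rsum_snoc m len f : rsum m (S len) f = rsum m len f + f (m + len)%nat.
Proof.
  revert m; induction len as [|len IH]; intro m.
  - unfold rsum; simpl; rewrite Nat.add_0_r; ring.
  - rewrite rsum_cons, IH, rsum_cons, Nat.add_succ_comm; ring.
Qed.

Lemma rsum_ext m len f g :
  (forall k, (m <= k < m + len)%nat -> f k = g k) -> rsum m len f = rsum m len g.
Proof.
  revert m; induction len as [|len IH]; intros m Hfg; [reflexivity|].
  rewrite !rsum_cons, (Hfg m), (IH (S m)); [reflexivity| |lia].
  intros; apply Hfg; lia.
Qed.

Lemma rsum_plus m len f g :
  rsum m len (fun k => f k + g k) = rsum m len f + rsum m len g.
Proof.
  revert m; induction len as [|len IH]; intro m; [unfold rsum; simpl; ring|].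
  rewrite !rsum_cons, IH; ring.
Qed.

Lemma rsum_scal m len c f : rsum m len (fun k => c * f k) = c * rsum m len f.
Proof.
  revert m; induction len as [|len IH]; intro m; [unfold rsum; simpl; ring|].
  rewrite !rsum_cons, IH; ring.
Qed.

Lemma rsum_eq0 m len f : (forall k, (m <= k < m + len)%nat -> f k = 0) -> rsum m len f = 0.
Proof.
  intro Hf; rewrite (rsum_ext m len f (fun _ => 0 * 0)), rsum_scal; [ring|].
  intros; rewrite Hf; [ring|assumption].
Qed.

Lemma rsum_shift m len f : rsum (S m) len f = rsum m len (fun k => f (S k)).
Proof.
  revert m; induction len as [|len IH]; intro m; [reflexivity|].
  rewrite !rsum_cons, IH; reflexivity.
Qed.

Lemma rsum_mul m len f g :
  rsum m len f * rsum m len g = rsum m len (fun i => rsum m len (fun j => f i * g j)).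
Proof.
  rewrite Rmult_comm, <- rsum_scal; apply rsum_ext; intros.
  rewrite Rmult_comm, <- rsum_scal; apply rsum_ext; intros; ring.
Qed.

Lemma rsum_swap n F :
  rsum 0 n (fun i => rsum 0 n (fun j => F i j)) = rsum 0 n (fun j => rsum 0 n (fun i => F i j)).
Proof.
  induction n as [|n IH]; [reflexivity|].
  rewrite !rsum_snoc, (rsum_ext 0 n _ (fun i => rsum 0 n (fun j => F i j) + F i n)),
    (rsum_ext 0 n (fun j => rsum 0 (S n) (fun i => F i j)) (fun j => rsum 0 n (fun i => F i j) + F n j)),
    !rsum_plus, IH by (intros; apply rsum_snoc).
  simpl Nat.add; change (rsum 0 n (F n)) with (rsum 0 n (fun j => F n j)); ring.
Qed.

Lemma rsum_delta n i v :
  (i < n)%nat -> rsum 0 n (fun j => if Nat.eqb i j then v j else 0) = v i.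
Proof.
  induction n as [|n IH]; intro Hi; [lia|].
  rewrite rsum_snoc; simpl.
  destruct (Nat.eq_dec i n) as [->|Hin].
  - rewrite Nat.eqb_refl, rsum_eq0; [ring|].
    intros k Hk; destruct (Nat.eqb_spec n k); [lia|reflexivity].
  - rewrite IH by lia; destruct (Nat.eqb_spec i n); [lia|ring].
Qed.

Lemma rsum_diag_offdiag n g :
  rsum 0 n (fun i => g i i) + rsum 0 n (fun i => rsum 0 n (fun j => if Nat.eqb i j then 0 else g i j))
  = rsum 0 n (fun i => rsum 0 n (fun j => g i j)).
Proof.
  rewrite <- rsum_plus; apply rsum_ext; intros i Hi.
  rewrite <- (rsum_delta n i (g i)) at 1 by lia.
  rewrite <- rsum_plus; apply rsum_ext; intros j _.
  destruct (Nat.eqb i j); ring.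
Qed.

Lemma rsum_offdiag_swap n g :
  rsum 0 n (fun i => rsum 0 n (fun j => if Nat.eqb i j then 0 else g j i))
  = rsum 0 n (fun i => rsum 0 n (fun j => if Nat.eqb i j then 0 else g i j)).
Proof.
  rewrite rsum_swap; apply rsum_ext; intros i _; apply rsum_ext; intros j _.
  rewrite Nat.eqb_sym; reflexivity.
Qed.

Lemma is_derive_rsum m len (F : nat -> R -> R) (dF : nat -> R) x :
  (forall k, (m <= k < m + len)%nat -> is_derive (F k) x (dF k)) ->
  is_derive (fun t => rsum m len (fun k => F k t)) x (rsum m len dF).
Proof.
  revert m; induction len as [|len IH]; intros m HF.
  - apply (is_derive_const (0 : R) x).
  - apply (is_derive_ext (fun t => F m t + rsum (S m) len (fun k => F k t))); [reflexivity|].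
    apply @is_derive_plus; [apply HF; lia|apply IH; intros; apply HF; lia].
Qed.

Lemma is_derive_mult_const (f : R -> R) c x l :
  is_derive f x l -> is_derive (fun t => f t * c) x (l * c).
Proof. exact (fun Hf => is_derive_scal_l f x l c Hf). Qed.

Lemma prodcoef_high l k : (length l < k)%nat -> prodcoef l k = 0.
Proof.
  revert k; induction l as [|c l IH]; intros [|k] Hk; simpl in *; try lia; [reflexivity|].
  rewrite !IH by lia; ring.
Qed.

Lemma prodcoef_top l : prodcoef l (length l) = 1.
Proof. induction l as [|c l IH]; simpl; [reflexivity|]. rewrite IH, prodcoef_high by lia; ring. Qed.

Lemma prodcoef_perm l l' : Permutation l l' -> forall k, prodcoef l k = prodcoef l' k.
Proof.
  induction 1 as [|x l l' _ IH|x y l|l l' l'' _ IH1 _ IH2]; intro k.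
  - reflexivity.
  - destruct k; simpl; rewrite !IH; reflexivity.
  - destruct k as [|[|k]]; simpl; ring.
  - rewrite IH1; apply IH2.
Qed.

Lemma sigma_perm l l' : Permutation l l' -> forall m, sigma l m = sigma l' m.
Proof.
  intros Hp m; unfold sigma; rewrite (Permutation_length Hp), (prodcoef_perm _ _ Hp); reflexivity.
Qed.

Lemma sigma_high l m : (length l < m)%nat -> sigma l m = 0.
Proof. intro Hm; unfold sigma; destruct (Nat.leb_spec m (length l)); [lia|reflexivity]. Qed.

Lemma prodcoef_sigma l k :
  (k <= length l)%nat -> prodcoef l (length l - k) = (-1) ^ k * sigma l k.
Proof.
  intro Hk; unfold sigma; destruct (Nat.leb_spec k (length l)); [|lia].
  rewrite <- Rmult_assoc, <- pow_add.
  replace (k + k)%nat with (2 * k)%nat by lia; rewrite pow_1_even; ring.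
Qed.

Lemma sigma_cons c l m : sigma (c :: l) m = sigma l m + c * sigma_pred l m.
Proof.
  destruct (Nat.leb_spec m (S (length l))) as [Hm|Hm].
  2: { rewrite !sigma_high by (simpl; lia); destruct m; [lia|]; simpl; rewrite sigma_high by lia; ring. }
  apply (Rmult_eq_reg_l ((-1) ^ m)); [|apply pow_nonzero; lra].
  rewrite <- prodcoef_sigma by exact Hm.
  destruct m as [|m]; simpl sigma_pred.
  - unfold sigma; simpl; rewrite Nat.sub_0_r, prodcoef_top, prodcoef_high by lia; ring.
  - simpl length; replace (S (length l) - S m)%nat with (length l - m)%nat by lia.
    destruct (Nat.eq_dec m (length l)) as [->|Hml].
    + rewrite Nat.sub_diag, sigma_high by lia; simpl.
      rewrite <- (Nat.sub_diag (length l)), prodcoef_sigma by lia; simpl; ring.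
    + replace (length l - m)%nat with (S (length l - S m)) by lia; simpl.
      replace (S (length l - S m)) with (length l - m)%nat by lia.
      rewrite !prodcoef_sigma by lia; simpl; ring.
Qed.

Lemma perm_filter_out (i : nat) l :
  NoDup l -> In i l -> Permutation l (i :: filter (fun x => negb (Nat.eqb x i)) l).
Proof.
  induction l as [|x l IH]; intros Hnd Hin; [destruct Hin|].
  inversion Hnd as [|? ? Hx Hnd']; subst; simpl.
  destruct (Nat.eqb_spec x i) as [->|Hxi]; simpl.
  - rewrite forallb_filter_id; [reflexivity|].
    apply forallb_forall; intros y Hy.
    destruct (Nat.eqb_spec y i); [subst; contradiction|reflexivity].
  - destruct Hin as [Hin|Hin]; [congruence|].
    eapply perm_trans; [apply perm_skip, IH; assumption|apply perm_swap].
Qed.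

Lemma filter_filter_andb {A} (p q : A -> bool) l :
  filter q (filter p l) = filter (fun x => andb (p x) (q x)) l.
Proof.
  induction l as [|x l IH]; simpl; [reflexivity|].
  destruct (p x); simpl; [destruct (q x); simpl|]; rewrite IH; reflexivity.
Qed.

Section Roots.
Variables (n : nat) (ai : nat -> R).

Lemma roots_perm i : (i < n)%nat -> Permutation (roots n ai) (ai i :: roots_but n ai i).
Proof.
  intro Hi; apply (Permutation_map ai (l' := i :: _)), perm_filter_out;
    [apply seq_NoDup|apply in_seq; lia].
Qed.

Lemma roots_but_perm i j : (j < n)%nat -> i <> j ->
  Permutation (roots_but n ai i) (ai j :: roots_but2 n ai i j).
Proof.
  intros Hj Hij; unfold roots_but2; rewrite <- filter_filter_andb.
  apply (Permutation_map ai (l' := j :: _)), perm_filter_out;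
    [apply NoDup_filter, seq_NoDup|].
  apply filter_In; split; [apply in_seq; lia|].
  destruct (Nat.eqb_spec j i); [lia|reflexivity].
Qed.

Lemma roots_but2_sym i j : roots_but2 n ai j i = roots_but2 n ai i j.
Proof. unfold roots_but2; f_equal; apply filter_ext; intro; apply Bool.andb_comm. Qed.

Lemma length_roots_but i : (i < n)%nat -> length (roots_but n ai i) = (n - 1)%nat.
Proof.
  intro Hi; pose proof (Permutation_length (roots_perm i Hi)) as Hlen.
  unfold roots in Hlen; rewrite length_map, length_seq in Hlen; simpl in Hlen; lia.
Qed.

Lemma Acoef_top : Acoef n ai n = 1.
Proof.
  unfold Acoef; replace n with (length (roots n ai)) at 2; [apply prodcoef_top|].
  unfold roots; rewrite length_map, length_seq; reflexivity.
Qed.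

(* the coefficient form of F(z) = (z - a_i) prod_(l <> i) (z - a_l) *)
Lemma Acoef_split i k : (i < n)%nat -> (k <= n)%nat ->
  Acoef n ai (n - k) =
  (-1) ^ k * (sigma_pred (roots_but n ai i) (S k) + ai i * sigma_pred (roots_but n ai i) k).
Proof.
  intros Hi Hk; simpl sigma_pred at 1; rewrite <- sigma_cons.
  unfold Acoef; rewrite (prodcoef_perm _ _ (roots_perm i Hi)).
  assert (Hlen : length (ai i :: roots_but n ai i) = n)
    by (simpl; rewrite length_roots_but; lia).
  rewrite <- prodcoef_sigma, Hlen by lia; reflexivity.
Qed.

Lemma sig_i_split i j m : (j < n)%nat -> i <> j ->
  sig_i n ai i m = sig_ij n ai i j m + ai j * sig_ij_pred n ai i j m.
Proof.
  intros Hj Hij; unfold sig_i.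
  rewrite (sigma_perm _ _ (roots_but_perm i j Hj Hij)); apply sigma_cons.
Qed.

Lemma sig_j_split i j m : (i < n)%nat -> i <> j ->
  sig_i n ai j m = sig_ij n ai i j m + ai i * sig_ij_pred n ai i j m.
Proof.
  intros Hi Hij; rewrite (sig_i_split j i) by auto.
  unfold sig_ij, sig_ij_pred; rewrite roots_but2_sym; reflexivity.
Qed.

Lemma sigma_pred_roots_but_top i : (i < n)%nat -> sigma_pred (roots_but n ai i) (S n) = 0.
Proof. intro Hi; apply sigma_high; rewrite length_roots_but; lia. Qed.

End Roots.

(* v is the (a, P_a)-part of the Poisson bracket {h, g} at (a, pa), where hA and hP are the
   partial derivatives of h there in a and P_a. *)
Definition is_bracket (hA hP : R) (g : R -> R -> R) (a pa v : R) : Prop :=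
  exists gA gP, is_derive (fun t => g t pa) a gA /\ is_derive (fun q => g a q) pa gP /\
    hA * gP - hP * gA = v.

Section Bracket.
Variables (hA hP a pa : R).

Lemma is_bracket_ext g g' v :
  (forall t q, g t q = g' t q) -> is_bracket hA hP g a pa v -> is_bracket hA hP g' a pa v.
Proof.
  intros Hg (gA & gP & HA & HP & Hv); exists gA, gP.
  split; [|split]; [apply (is_derive_ext _ _ _ _ (fun t => Hg t pa))
                   |apply (is_derive_ext _ _ _ _ (fun q => Hg a q))|]; assumption.
Qed.

Lemma is_bracket_plus g1 g2 v1 v2 :
  is_bracket hA hP g1 a pa v1 -> is_bracket hA hP g2 a pa v2 ->
  is_bracket hA hP (fun t q => g1 t q + g2 t q) a pa (v1 + v2).
Proof.
  intros (gA1 & gP1 & HA1 & HP1 & Hv1) (gA2 & gP2 & HA2 & HP2 & Hv2).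
  exists (gA1 + gA2), (gP1 + gP2); split; [|split]; [apply @is_derive_plus; auto..|lra].
Qed.

Lemma is_bracket_scal c g v :
  is_bracket hA hP g a pa v -> is_bracket hA hP (fun t q => c * g t q) a pa (c * v).
Proof.
  intros (gA & gP & HA & HP & Hv); exists (c * gA), (c * gP).
  split; [|split]; [apply is_derive_scal; auto..|rewrite <- Hv; ring].
Qed.

Lemma is_bracket_rsum m len (F : nat -> R -> R -> R) (v : nat -> R) w :
  (forall k, (m <= k < m + len)%nat -> is_bracket hA hP (F k) a pa (v k)) ->
  rsum m len v = w ->
  is_bracket hA hP (fun t q => rsum m len (fun k => F k t q)) a pa w.
Proof.
  intros HF <-; revert m HF; induction len as [|len IH]; intros m HF.
  - exists 0, 0; split; [|split]; [apply (is_derive_const (0 : R))..|unfold rsum; simpl; ring].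
  - apply is_bracket_plus; [apply HF; lia|apply IH; intros; apply HF; lia].
Qed.

Lemma is_bracket_Derive g v : is_bracket hA hP g a pa v ->
  hA * Derive (fun q => g a q) pa - hP * Derive (fun t => g t pa) a = v.
Proof.
  intros (gA & gP & HA & HP & Hv).
  replace (Derive (fun t => g t pa) a) with gA by (symmetry; now apply is_derive_unique).
  replace (Derive (fun q => g a q) pa) with gP by (symmetry; now apply is_derive_unique).
  exact Hv.
Qed.

End Bracket.

Section Monomial.
Variables (r : R -> R) (a pa p r' : R).
Hypothesis Hr : is_derive r a r'.

Let Pi := r a * pa.
Let Hv := Pi ^ 2 + a * p ^ 2.
Let hA := 2 * Pi * (r' * pa) + p ^ 2.
Let hP := 2 * Pi * r a.

(* For H = Pi^2 + a p^2: {H, Pi} = r p^2, {H, H} = 0 and {H, beta} = -2 r beta' Pi. *)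
Lemma is_bracket_monomial (beta : R -> R) beta' m e C :
  is_derive beta a beta' ->
  is_bracket hA hP (fun t q => beta t * ((r t * q) ^ 2 + t * p ^ 2) ^ m * (r t * q) ^ e * C) a pa
    (r a * Hv ^ m * (INR e * beta a * Pi ^ pred e * p ^ 2 - 2 * beta' * Pi * Pi ^ e) * C).
Proof.
  intro Hb; eexists _, _; split; [|split].
  - auto_derive; [repeat split; eexists; eauto|reflexivity].
  - auto_derive; [exact I|reflexivity].
  - replace (Derive (fun x => r x) a) with r' by (symmetry; now apply is_derive_unique).
    replace (Derive (fun x => beta x) a) with beta' by (symmetry; now apply is_derive_unique).
    unfold hA, hP, Hv, Pi; simpl; ring.
Qed.

End Monomial.

(* Abel summation, using Pi^2 = H - a p^2 to shift the H-degree. *)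
Lemma rsum_telescope n (b b' A : nat -> R) X a Hv p Pi :
  Hv = Pi ^ 2 + a * p ^ 2 -> b O = 0 -> b' O = 0 -> b' (S n) = 0 ->
  (forall k, (k <= n)%nat -> b k + 2 * a * b' k - 2 * b' (S k) = 2 * X * A (n - k)%nat) ->
  rsum 1 n (fun k => Hv ^ (n - k) * (b k * p ^ 2 - 2 * b' k * Pi ^ 2) * p ^ (2 * k - 1))
  = 2 * X * p * rsum 0 (S n) (fun k => A (n - k)%nat * Hv ^ (n - k) * p ^ (2 * k)).
Proof.
  intros HH b0 b'0 b'top Hrec.
  set (V := fun k => p ^ (2 * k + 1) * Hv ^ (n - k) * (b k + 2 * a * b' k)).
  set (W := fun k => p ^ (2 * k + 1) * Hv ^ (n - k) * b' (S k)).
  assert (HV : rsum 1 n V = rsum 0 (S n) V).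
  { rewrite (rsum_cons 0); replace (V O) with 0 by (unfold V; rewrite b0, b'0; ring); ring. }
  assert (HW : rsum 0 n W = rsum 0 (S n) W).
  { rewrite rsum_snoc; replace (W (0 + n)%nat) with 0
      by (unfold W; rewrite Nat.add_0_l, b'top; ring); ring. }
  transitivity (rsum 0 (S n) V + -2 * rsum 0 (S n) W).
  - rewrite <- HV, <- HW, <- rsum_scal, !rsum_shift, <- rsum_plus.
    apply rsum_ext; intros k Hk; unfold V, W.
    replace (2 * S k - 1)%nat with (2 * k + 1)%nat by lia.
    replace (2 * S k + 1)%nat with (2 * k + 1 + 2)%nat by lia.
    replace (n - k)%nat with (S (n - S k)) by lia.
    rewrite !pow_add, HH; simpl; ring.
  - rewrite <- rsum_scal, <- rsum_plus, <- !rsum_scal; apply rsum_ext; intros k Hk.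
    unfold V, W; rewrite pow_add, pow_1.
    transitivity (p * p ^ (2 * k) * Hv ^ (n - k) * (b k + 2 * a * b' k - 2 * b' (S k))); [ring|].
    rewrite Hrec by lia; ring.
Qed.

Section Model.
Variables (n : nat) (ai eps xi : nat -> R).

Local Notation Delta := (Deltai ai eps).
Local Notation xdot := (xdot n ai eps xi).

Definition pi_coef t := t / xdot t.
Definition xterm i t := xi i / sqrt (Delta i t).
Definition xterm' i t := - xi i * eps i / (2 * Delta i t * sqrt (Delta i t)).
Definition sig_i_pred i k := sigma_pred (roots_but n ai i) k.
(* b~_k with weights f in place of xi_i / sqrt Delta_i; unlike btil (where k - 1 truncates)
   it vanishes at k = 0, since sigma_pred _ 0 = sigma_(-1) = 0. *)
Definition bcoef (f : nat -> R) k := (-1) ^ k * rsum 0 n (fun i => f i * sig_i_pred i k).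

Lemma is_derive_xterm i a : 0 < Delta i a -> is_derive (xterm i) a (xterm' i a).
Proof.
  intro HD; unfold xterm, xterm', Deltai in *; auto_derive.
  - split; [exact HD|]; split; [|exact I]; apply Rgt_not_eq, sqrt_lt_R0, HD.
  - pose proof (sqrt_lt_R0 _ HD).
    replace (a + - ai i) with (a - ai i) by ring; rewrite sqrt_sqrt by lra.
    field; split; [lra|split; intro Hz; rewrite Hz in HD; lra].
Qed.

Lemma xterm_eq i a : 0 < Delta i a -> xterm i a = -2 * (a - ai i) * xterm' i a.
Proof.
  intro HD; pose proof (sqrt_lt_R0 _ HD); unfold xterm, xterm', Deltai in *.
  field; split; [lra|split; intro Hz; rewrite Hz in HD; lra].
Qed.

Lemma xdot_sum a : (forall i, (i < n)%nat -> 0 < Delta i a) ->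
  xdot a = rsum 0 n (fun i => xterm' i a).
Proof.
  intro HD; apply is_derive_unique, (is_derive_rsum 0 n xterm).
  intros; apply is_derive_xterm, HD; lia.
Qed.

Lemma bcoef_0 f : bcoef f 0 = 0.
Proof. unfold bcoef; rewrite rsum_eq0; [ring|intros; unfold sig_i_pred; simpl; ring]. Qed.

Lemma bcoef_top f : bcoef f (S n) = 0.
Proof.
  unfold bcoef; rewrite rsum_eq0; [ring|intros i Hi].
  unfold sig_i_pred; rewrite sigma_pred_roots_but_top by lia; ring.
Qed.

Lemma bcoef_recursion (f f' : nat -> R) a k :
  (forall i, (i < n)%nat -> f i = -2 * (a - ai i) * f' i) -> (k <= n)%nat ->
  bcoef f k + 2 * a * bcoef f' k - 2 * bcoef f' (S k) = 2 * rsum 0 n f' * Acoef n ai (n - k).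
Proof.
  intros Hf Hk; apply Rminus_diag_uniq.
  transitivity (rsum 0 n (fun i => (-1) ^ k * (f i * sig_i_pred i k)
    + 2 * a * (-1) ^ k * (f' i * sig_i_pred i k)
    + -2 * (-1) ^ S k * (f' i * sig_i_pred i (S k)) + -2 * Acoef n ai (n - k) * f' i)).
  { unfold bcoef; rewrite !rsum_plus, !rsum_scal; ring. }
  apply rsum_eq0; intros i Hi; unfold sig_i_pred.
  rewrite (Acoef_split n ai i k), (Hf i) by lia; simpl; ring.
Qed.

(* The left side is the termwise a-derivative of 2 (-1)^(k+1) c~_k for m = k - 1: the pair
   terms symmetrize to f_i f_j' sigma^i_m + f_j f_i' sigma^j_m. *)
Lemma pair_sum_sigma (f f' : nat -> R) a m :
  (forall i, (i < n)%nat -> f i = -2 * (a - ai i) * f' i) ->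
  rsum 0 n (fun i => 2 * f i * f' i * sig_i n ai i m)
  + rsum 0 n (fun i => rsum 0 n (fun j => if Nat.eqb i j then 0 else
      (f' i * f j + f i * f' j) * (sig_ij n ai i j m + a * sig_ij_pred n ai i j m)
      + f i * f j * sig_ij_pred n ai i j m))
  = 2 * rsum 0 n f' * rsum 0 n (fun i => f i * sig_i n ai i m).
Proof.
  intro Hf; set (g i j := f i * f' j * sig_i n ai i m).
  assert (Hpair : forall i j, (i < n)%nat -> (j < n)%nat -> i <> j ->
    (f' i * f j + f i * f' j) * (sig_ij n ai i j m + a * sig_ij_pred n ai i j m)
    + f i * f j * sig_ij_pred n ai i j m = g i j + g j i).
  { intros i j Hi Hj Hij; unfold g.
    rewrite (sig_i_split n ai i j), (sig_j_split n ai i j), (Hf i), (Hf j) by assumption; ring. }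
  match goal with |- _ + rsum 0 n ?offdiag = _ =>
    rewrite (rsum_ext 0 n offdiag (fun i => rsum 0 n (fun j => if Nat.eqb i j then 0 else g i j)
      + rsum 0 n (fun j => if Nat.eqb i j then 0 else g j i))) end.
  2: { intros i Hi; rewrite <- rsum_plus; apply rsum_ext; intros j Hj.
       destruct (Nat.eqb_spec i j); [ring|apply Hpair; lia]. }
  rewrite rsum_plus, (rsum_offdiag_swap n g).
  rewrite (rsum_ext 0 n (fun i => 2 * f i * f' i * sig_i n ai i m) (fun i => 2 * g i i)),
    rsum_scal by (intros; unfold g; ring).
  transitivity (2 * (rsum 0 n (fun i => g i i)
    + rsum 0 n (fun i => rsum 0 n (fun j => if Nat.eqb i j then 0 else g i j)))); [ring|].
  rewrite rsum_diag_offdiag.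
  transitivity (2 * (rsum 0 n (fun i => f i * sig_i n ai i m) * rsum 0 n f')); [|ring].
  rewrite rsum_mul; f_equal; apply rsum_ext; intros; apply rsum_ext; intros; unfold g; ring.
Qed.

Lemma bcoef_sig_i f k : (1 <= k)%nat ->
  bcoef f k = (-1) ^ k * rsum 0 n (fun i => f i * sig_i n ai i (k - 1)).
Proof.
  intro Hk; destruct k as [|k]; [lia|].
  unfold bcoef, sig_i_pred; simpl; rewrite Nat.sub_0_r; reflexivity.
Qed.

Lemma btil_bcoef k a : (1 <= k)%nat -> btil n ai eps xi k a = bcoef (fun i => xterm i a) k.
Proof. intro Hk; rewrite bcoef_sig_i by exact Hk; reflexivity. Qed.

Lemma btil_derive k a : (1 <= k)%nat -> (forall i, (i < n)%nat -> 0 < Delta i a) ->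
  is_derive (btil n ai eps xi k) a (bcoef (fun i => xterm' i a) k).
Proof.
  intros Hk HD; rewrite bcoef_sig_i by exact Hk.
  apply is_derive_scal, (is_derive_rsum 0 n (fun i t => xterm i t * sig_i n ai i (k - 1))).
  intros i Hi; apply is_derive_mult_const, is_derive_xterm, HD; lia.
Qed.

Lemma is_derive_xterm_sq i a s : 0 < Delta i a ->
  is_derive (fun t => xi i ^ 2 / Delta i t * s) a (2 * xterm i a * xterm' i a * s).
Proof.
  intro HD; apply is_derive_mult_const; pose proof (sqrt_lt_R0 _ HD).
  unfold xterm, xterm', Deltai in *; auto_derive.
  - replace (a + - ai i) with (a - ai i) by ring; lra.
  - replace (a + - ai i) with (a - ai i) by ring.
    pose proof (sqrt_sqrt _ (Rlt_le _ _ HD)) as Hsq.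
    set (g := sqrt (eps i * (a - ai i))) in *; rewrite <- Hsq; field; lra.
Qed.

Lemma is_derive_xterm_pair i j a s1 s2 : 0 < Delta i a -> 0 < Delta j a ->
  is_derive (fun t => xi i * xi j / sqrt (Delta i t * Delta j t) * (s1 + t * s2)) a
    ((xterm' i a * xterm j a + xterm i a * xterm' j a) * (s1 + a * s2)
     + xterm i a * xterm j a * s2).
Proof.
  intros HDi HDj; pose proof (sqrt_lt_R0 _ HDi); pose proof (sqrt_lt_R0 _ HDj).
  unfold xterm, xterm', Deltai in *; auto_derive.
  - split; [nra|]; split; [|exact I]; apply Rgt_not_eq, sqrt_lt_R0; nra.
  - replace (a + - ai i) with (a - ai i) by ring; replace (a + - ai j) with (a - ai j) by ring.
    rewrite sqrt_mult by lra.
    pose proof (sqrt_sqrt _ (Rlt_le _ _ HDi)) as Hsqi.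
    pose proof (sqrt_sqrt _ (Rlt_le _ _ HDj)) as Hsqj.
    set (gi := sqrt (eps i * (a - ai i))) in *; set (gj := sqrt (eps j * (a - ai j))) in *.
    rewrite <- Hsqi, <- Hsqj; field; lra.
Qed.

Lemma ctil_derive k a : (forall i, (i < n)%nat -> 0 < Delta i a) ->
  is_derive (ctil n ai eps xi k) a (- xdot a * btil n ai eps xi k a).
Proof.
  intro HD; rewrite xdot_sum by exact HD.
  replace (- rsum 0 n (fun i => xterm' i a) * btil n ai eps xi k a) with
    ((-1) ^ (k + 1) / 2 * (2 * rsum 0 n (fun i => xterm' i a)
       * rsum 0 n (fun i => xterm i a * sig_i n ai i (k - 1))))
    by (change (btil n ai eps xi k a) with
          ((-1) ^ k * rsum 0 n (fun i => xterm i a * sig_i n ai i (k - 1)));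
        rewrite pow_add; field).
  rewrite <- (pair_sum_sigma (fun i => xterm i a) (fun i => xterm' i a) a (k - 1))
    by (intros; apply xterm_eq, HD; assumption).
  apply is_derive_scal, @is_derive_plus; apply is_derive_rsum; intros i Hi.
  - apply is_derive_xterm_sq, HD; lia.
  - apply is_derive_rsum; intros j Hj.
    destruct (Nat.eqb i j); [apply (is_derive_const (0 : R))|].
    apply is_derive_xterm_pair; apply HD; lia.
Qed.

Lemma ex_derive_xterm' i a : 0 < Delta i a -> ex_derive (xterm' i) a.
Proof.
  intro HD; pose proof (sqrt_lt_R0 _ HD); unfold xterm', Deltai in *; auto_derive.
  replace (a + - ai i) with (a - ai i) by ring.
  repeat split; [exact HD|]; apply Rgt_not_eq, Rmult_lt_0_compat; lra.
Qed.

Section OnInterval.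
Variable I : R -> Prop.
Hypothesis HIopen : open I.
Hypothesis HDelta : forall a i, I a -> (i < n)%nat -> 0 < Delta i a.
Hypothesis Hxdot : forall a, I a -> xdot a <> 0.

Lemma ex_derive_xdot a : I a -> ex_derive xdot a.
Proof.
  intro Ha.
  assert (Hloc : locally a (fun t => rsum 0 n (fun i => xterm' i t) = xdot t)).
  { apply (filter_imp I); [|exact (HIopen a Ha)].
    intros t Ht; symmetry; apply xdot_sum; intros; apply HDelta; assumption. }
  eexists; eapply is_derive_ext_loc; [exact Hloc|].
  apply (is_derive_rsum 0 n xterm' (fun i => Derive (xterm' i) a)); intros i Hi.
  apply Derive_correct, ex_derive_xterm', HDelta; [assumption|lia].
Qed.

Lemma is_derive_pi_coef a : I a -> is_derive pi_coef a (Derive pi_coef a).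
Proof.
  intro Ha; apply Derive_correct; pose proof (ex_derive_xdot a Ha); unfold pi_coef.
  auto_derive; repeat split; [assumption|apply Hxdot, Ha].
Qed.

End OnInterval.

Local Notation H := (HF n ai eps xi).

Lemma dpart_HF_y a y pa py : dpart 1 H a y pa py = 0.
Proof. unfold dpart, HF, PiF; apply Derive_const. Qed.

Lemma dpart_HF_Pa a y pa py : dpart 2 H a y pa py = 2 * (pi_coef a * pa) * pi_coef a.
Proof. apply is_derive_unique; unfold HF, PiF, pi_coef; auto_derive; [exact I|ring]. Qed.

Lemma dpart_HF_Py a y pa py : dpart 3 H a y pa py = 2 * a * py.
Proof. apply is_derive_unique; unfold HF, PiF; auto_derive; [exact I|ring]. Qed.

Lemma dpart_PyF c a y pa py : dpart c PyF a y pa py = if Nat.ltb c 3 then 0 else 1.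
Proof.
  destruct c as [|[|[|[|c]]]]; simpl; unfold PyF; try apply Derive_const.
  all: apply is_derive_unique; auto_derive; auto.
Qed.

Lemma dpart_S1F_y a y pa py : dpart 1 (S1F n ai eps xi) a y pa py = GF n ai eps xi a y pa py.
Proof.
  apply is_derive_unique, (is_derive_ext
    (fun t => Q1F n ai eps xi a y pa py + t * GF n ai eps xi a y pa py)); [reflexivity|].
  auto_derive; [exact I|ring].
Qed.

Lemma dpart_S2F_y a y pa py :
  dpart 1 (S2F n ai eps xi) a y pa py = Q1F n ai eps xi a y pa py + y * GF n ai eps xi a y pa py.
Proof.
  apply is_derive_unique, (is_derive_ext (fun t => Q2F n ai eps xi a y pa py
    + t * Q1F n ai eps xi a y pa py + t ^ 2 / 2 * GF n ai eps xi a y pa py)); [reflexivity|].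
  auto_derive; [exact I|field].
Qed.

Lemma pbracket_HF_PyF a y pa py : pbracket H PyF a y pa py = 0.
Proof. unfold pbracket; rewrite !dpart_PyF, dpart_HF_y; simpl; ring. Qed.

Section BracketsAtPoint.
Variables (a y pa py r' : R).
Hypothesis HD : forall i, (i < n)%nat -> 0 < Delta i a.
Hypothesis Hx : xdot a <> 0.
Hypothesis Hr : is_derive pi_coef a r'.

Let Pi := pi_coef a * pa.
Let hA := 2 * Pi * (r' * pa) + py ^ 2.
Let hP := 2 * Pi * pi_coef a.

Lemma dpart_HF_a : dpart 0 H a y pa py = hA.
Proof.
  apply is_derive_unique; unfold HF, PiF.
  apply (is_derive_ext (fun t => (pi_coef t * pa) ^ 2 + t * py ^ 2)); [reflexivity|].
  auto_derive; [eexists; exact Hr|].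
  replace (Derive (fun x => pi_coef x) a) with r' by (symmetry; now apply is_derive_unique).
  unfold hA, Pi; ring.
Qed.

Lemma pbracket_HF S v : is_bracket hA hP (fun t q => S t y q py) a pa v ->
  pbracket H S a y pa py = v - 2 * a * py * dpart 1 S a y pa py.
Proof.
  intro Hb; rewrite <- (is_bracket_Derive _ _ _ _ _ _ Hb).
  unfold pbracket; rewrite dpart_HF_a, dpart_HF_y, dpart_HF_Pa, dpart_HF_Py.
  unfold hP, Pi; simpl; ring.
Qed.

Lemma is_bracket_GF : is_bracket hA hP (fun t q => GF n ai eps xi t y q py) a pa 0.
Proof.
  eapply is_bracket_rsum.
  - intros k Hk; eapply is_bracket_ext; [|apply (is_bracket_monomial pi_coef a pa py r' Hr
      (fun _ => Acoef n ai (n - k)) 0 (n - k) 0 (py ^ (2 * k)) (is_derive_const _ _))].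
    intros t q; unfold HF, PiF, pi_coef; simpl; ring.
  - apply rsum_eq0; intros; simpl; ring.
Qed.

Lemma is_bracket_Q1F :
  is_bracket hA hP (fun t q => Q1F n ai eps xi t y q py) a pa (2 * a * py * GF n ai eps xi a y pa py).
Proof.
  eapply is_bracket_rsum.
  - intros k Hk; eapply is_bracket_ext; [|apply (is_bracket_monomial pi_coef a pa py r' Hr
      (btil n ai eps xi k) _ (n - k) 1 (py ^ (2 * k - 1)) (btil_derive k a ltac:(lia) HD))].
    intros t q; unfold HF, PiF, pi_coef; simpl; ring.
  - transitivity (pi_coef a * rsum 1 n (fun k => (Pi ^ 2 + a * py ^ 2) ^ (n - k)
      * (bcoef (fun i => xterm i a) k * py ^ 2 - 2 * bcoef (fun i => xterm' i a) k * Pi ^ 2)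
      * py ^ (2 * k - 1))).
    { rewrite <- rsum_scal; apply rsum_ext; intros k Hk.
      rewrite btil_bcoef by lia; unfold Pi; simpl; ring. }
    rewrite (rsum_telescope n _ _ (Acoef n ai) (rsum 0 n (fun i => xterm' i a)) a _ py Pi),
      <- xdot_sum by first [reflexivity|apply bcoef_0|apply bcoef_top|exact HD
        |intros; apply bcoef_recursion; [intros; apply xterm_eq, HD|]; assumption].
    unfold GF, HF, PiF, Pi, pi_coef; field; exact Hx.
Qed.

Lemma is_bracket_Q2F :
  is_bracket hA hP (fun t q => Q2F n ai eps xi t y q py) a pa (2 * a * py * Q1F n ai eps xi a y pa py).
Proof.
  eapply is_bracket_rsum.
  - intros k Hk; eapply is_bracket_ext; [|apply (is_bracket_monomial pi_coef a pa py r' Hr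
      (ctil n ai eps xi k) _ (n - k) 0 (py ^ (2 * k)) (ctil_derive k a HD))].
    intros t q; unfold HF, PiF, pi_coef; simpl; ring.
  - unfold Q1F; rewrite <- rsum_scal; apply rsum_ext; intros k Hk.
    replace (2 * k)%nat with (S (2 * k - 1)) at 1 by lia.
    unfold HF, PiF, Pi, pi_coef; simpl; field; exact Hx.
Qed.

Lemma pbracket_HF_S1F : pbracket H (S1F n ai eps xi) a y pa py = 0.
Proof.
  rewrite (pbracket_HF _ (2 * a * py * GF n ai eps xi a y pa py + y * 0)), dpart_S1F_y; [ring|].
  apply is_bracket_plus; [apply is_bracket_Q1F|apply is_bracket_scal, is_bracket_GF].
Qed.

Lemma pbracket_HF_S2F : pbracket H (S2F n ai eps xi) a y pa py = 0.
Proof.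
  rewrite (pbracket_HF _ (2 * a * py * Q1F n ai eps xi a y pa py
    + y * (2 * a * py * GF n ai eps xi a y pa py) + y ^ 2 / 2 * 0)), dpart_S2F_y; [ring|].
  apply is_bracket_plus; [apply is_bracket_plus|]; [apply is_bracket_Q2F|..];
    apply is_bracket_scal; [apply is_bracket_Q1F|apply is_bracket_GF].
Qed.

End BracketsAtPoint.

Lemma wedge3_HF_PyF S a y pa py :
  wedge3_comp H PyF S 1 2 3 a y pa py = dpart 2 H a y pa py * dpart 1 S a y pa py.
Proof. unfold wedge3_comp, det3; rewrite !dpart_PyF, dpart_HF_y; simpl; ring. Qed.

Lemma GF_Py0 a y pa : GF n ai eps xi a y pa 0 = H a y pa 0 ^ n.
Proof.
  unfold GF; rewrite rsum_cons, rsum_eq0, Nat.sub_0_r, Acoef_top; [simpl; ring|].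
  intros [|k] Hk; [lia|]; simpl; ring.
Qed.

Lemma Q1F_Py0 a y pa : Q1F n ai eps xi a y pa 0 = 0.
Proof.
  apply rsum_eq0; intros k Hk.
  replace (2 * k - 1)%nat with (S (2 * k - 2)) by lia; simpl; ring.
Qed.

Lemma func_indep_HF_PyF (I : R -> Prop) S a : I a -> 0 < a -> xdot a <> 0 ->
  dpart 1 S a 1 1 0 = H a 1 1 0 ^ n -> func_indep I H PyF S.
Proof.
  intros Ha Hpos Hx HS; exists a, 1, 1, 0; split; [exact Ha|].
  exists 1%nat, 2%nat, 3%nat; do 3 (split; [lia|]).
  rewrite wedge3_HF_PyF, dpart_HF_Pa, HS.
  replace (H a 1 1 0) with (pi_coef a ^ 2) by (unfold HF, PiF, pi_coef; ring).
  assert (Hc : pi_coef a <> 0).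
  { apply Rmult_integral_contrapositive_currified; [lra|apply Rinv_neq_0_compat, Hx]. }
  rewrite Rmult_1_r; apply Rmult_integral_contrapositive_currified;
    [|apply pow_nonzero, pow_nonzero, Hc].
  apply Rmult_integral_contrapositive_currified; [|exact Hc].
  apply Rmult_integral_contrapositive_currified; [lra|exact Hc].
Qed.
End Model.

Theorem theorem1
  (n : nat) (ai eps xi : nat -> R) (I : R -> Prop)
  (Hn : (2 <= n)%nat)
  (Hdist : forall i j, (i < n)%nat -> (j < n)%nat -> i <> j -> ai i <> ai j)
  (Heps : forall i, (i < n)%nat -> eps i = 1 \/ eps i = -1)
  (HIopen : open I)
  (HIint : forall u v w, I u -> I w -> u <= v <= w -> I v)
  (HIne : exists a0, I a0)
  (HIpos : forall a, I a -> 0 < a)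
  (HDelta : forall a i, I a -> (i < n)%nat -> 0 < Deltai ai eps i a)
  (Hxdot : forall a, I a -> xdot n ai eps xi a <> 0) :
  (forall a y pa py, I a ->
      pbracket (HF n ai eps xi) PyF a y pa py = 0 /\
      pbracket (HF n ai eps xi) (S1F n ai eps xi) a y pa py = 0 /\
      pbracket (HF n ai eps xi) (S2F n ai eps xi) a y pa py = 0) /\
  func_indep I (HF n ai eps xi) PyF (S1F n ai eps xi) /\
  func_indep I (HF n ai eps xi) PyF (S2F n ai eps xi).
Proof.
  destruct HIne as [a0 Ha0].
  split; [|split].
  - intros a y pa py Ha.
    pose proof (is_derive_pi_coef n ai eps xi I HIopen HDelta Hxdot a Ha) as Hr.
    assert (HD : forall i, (i < n)%nat -> 0 < Deltai ai eps i a) by auto.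
    split; [|split].
    + apply pbracket_HF_PyF.
    + exact (pbracket_HF_S1F n ai eps xi a y pa py _ HD (Hxdot a Ha) Hr).
    + exact (pbracket_HF_S2F n ai eps xi a y pa py _ HD (Hxdot a Ha) Hr).
  - apply (func_indep_HF_PyF n ai eps xi I _ a0 Ha0 (HIpos a0 Ha0) (Hxdot a0 Ha0)).
    rewrite dpart_S1F_y, GF_Py0; reflexivity.
  - apply (func_indep_HF_PyF n ai eps xi I _ a0 Ha0 (HIpos a0 Ha0) (Hxdot a0 Ha0)).
    rewrite dpart_S2F_y, GF_Py0, Q1F_Py0; ring.
Qed.
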